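(* Fix a TxnSP instance. Every representable subschedule is prime.
   Context: TxnSP instance: jobs $J=\{1,\dots,n\}$, identical machines $1,\dots,m$, lengths $L_\alpha>0$, symmetric binary conflict matrix $C$ with zero diagonal ($C_{\alpha\beta}=1$ iff $\alpha\neq\beta$ conflict). Insertion process: Start from some state, where each machine $\mu$ has a processing time $P_\mu$ (initially $0$ when empty). An instruction $(\alpha,\mu)$ appends a not-yet-placed job $\alpha$ at the end of machine $\mu$. It assigns $\alpha$ the start time $st(\alpha)$, defined as the least $t\ge P_\mu$ such that $[t,t+L_\alpha)$ is disjoint from $[st(\beta),ct(\beta))$ for every already placed job $\beta$ with $C_{\alpha\beta}=1$. It then sets the completion time $ct(\alpha)=st(\alpha)+L_\alpha$ and updates $P_\mu:=ct(\alpha)$. A subschedule formed by $S\subseteq J$ is the result of applying, from the empty state, a list of instructions whose jobs are exactly $S$. Its size is $|S|$, and its makespan $ms$ is $\max_\mu P_\mu$. A subschedule $j$ is derived from $i$ (and $i$ is a root of $j$) if there is an instruction list producing $i$ and a further list whose application after it produces $j$. $LJ_i$ is the set of last jobs on the nonempty machines of $i$. A subschedule $i$ is reducible by $\alpha\in LJ_i$ if removing $\alpha$ from the end of its machine and appending it to a different machine (with start time given by the insertion rule relative to the remaining jobs) yields a strictly smaller makespan. $i$ is non-reducible if it is reducible by no $\alpha\in LJ_i$. A non-reducible subschedule $i$ of size $c$ is prime if for every $d<c$ it has at least one non-reducible root of size $d$. Derivation rule: given a sequence $(\alpha_1,\dots,\alpha_c)$ of distinct jobs, insert them in this order, each into a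 machine with currently smallest processing time $P_\mu$, breaking ties by smallest machine index. A subschedule is representable if it is obtained by applying the derivation rule to some sequence of distinct jobs (a permutation of the subset forming it). *)

From HB Require Import structures.
From mathcomp Require Import all_boot all_order all_algebra.
Set Implicit Arguments. Unset Strict Implicit. Unset Printing Implicit Defensive.
Import Order.TTheory GRing.Theory Num.Theory.
Local Open Scope ring_scope.

Section TxnSP.
Variable R : realFieldType.
Variables n m : nat.
Variable L : 'I_n -> R.
Variable C : 'I_n -> 'I_n -> bool.

(* A state: the ordered list of jobs on each machine, and start times
   (start times of unplaced jobs are irrelevant and kept at 0). *)
Record state := State {
  seqs : {ffun 'I_m -> seq 'I_n};
  stt  : {ffun 'I_n -> R} }.

Definition empty_state : state := State [ffun _ => [::]] [ffun _ => 0].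

Definition placed (s : state) (a : 'I_n) : bool := [exists mu, a \in seqs s mu].

Definition ct (s : state) (a : 'I_n) : R := stt s a + L a.

Definition proc (s : state) (mu : 'I_m) : R :=
  if seqs s mu is a :: r then ct s (last a r) else 0.

Definition makespan (s : state) : R := \big[Num.max/0]_(mu : 'I_m) proc s mu.

Definition size_of (s : state) : nat := #|[pred a | placed s a]|.

Definition free (s : state) (a : 'I_n) (t : R) : Prop :=
  forall b, placed s b -> C a b -> t + L a <= stt s b \/ ct s b <= t.

(* t is the start time given to a appended on machine mu by the insertion rule *)
Definition is_start (s : state) (a : 'I_n) (mu : 'I_m) (t : R) : Prop :=
  [/\ proc s mu <= t, free s a t &
      forall t', proc s mu <= t' -> free s a t' -> t <= t'].

Definition append (s : state) (a : 'I_n) (mu : 'I_m) (t : R) : state :=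
  State [ffun nu => if nu == mu then rcons (seqs s nu) a else seqs s nu]
        [ffun b => if b == a then t else stt s b].

Definition step (s : state) (ins : 'I_n * 'I_m) (s' : state) : Prop :=
  ~~ placed s ins.1 /\
  exists t, is_start s ins.1 ins.2 t /\ s' = append s ins.1 ins.2 t.

Fixpoint run (s : state) (l : seq ('I_n * 'I_m)) (s' : state) : Prop :=
  if l is ins :: l' then exists s1, step s ins s1 /\ run s1 l' s' else s' = s.

Definition subschedule (s : state) : Prop := exists l, run empty_state l s.

Definition root (r s : state) : Prop :=
  exists l1 l2, run empty_state l1 r /\ run r l2 s.

Definition last_job (s : state) (mu : 'I_m) (a : 'I_n) : Prop :=
  exists r, seqs s mu = rcons r a.

Definition remove_last (s : state) (mu : 'I_m) (r : seq 'I_n) : state :=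
  State [ffun nu => if nu == mu then r else seqs s nu] (stt s).

Definition reducible (s : state) : Prop :=
  exists (mu : 'I_m) (r : seq 'I_n) (a : 'I_n),
    seqs s mu = rcons r a /\
    exists (nu : 'I_m) (t : R),
      [/\ nu != mu, is_start (remove_last s mu r) a nu t &
          makespan (append (remove_last s mu r) a nu t) < makespan s].

Definition non_reducible (s : state) : Prop := ~ reducible s.

Definition prime_sub (s : state) : Prop :=
  [/\ subschedule s, non_reducible s &
      forall d, (d < size_of s)%N ->
        exists r, [/\ root r s, size_of r = d & non_reducible r]].

Definition rule_step (s : state) (a : 'I_n) (s' : state) : Prop :=
  exists mu : 'I_m,
    (forall nu : 'I_m, proc s mu < proc s nu \/ (proc s mu = proc s nu /\ (mu <= nu)%N))
    /\ step s (a, mu) s'.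

Fixpoint rule_run (s : state) (l : seq 'I_n) (s' : state) : Prop :=
  if l is a :: l' then exists s1, rule_step s a s1 /\ rule_run s1 l' s' else s' = s.

Definition representable (s : state) : Prop :=
  exists l : seq 'I_n, uniq l /\ rule_run empty_state l s.

End TxnSP.

(* Under the derivation rule, each job a is appended to a machine of minimum
   processing time, and later insertions keep every placed job where it is and
   only increase processing times.  If a, last on its machine mu, is moved to
   another machine nu, its new start time t' was therefore already admissible
   when a was inserted: nu was at least as loaded as mu then and is no less
   loaded now, and t' avoids every conflicting job placed at that time.  Hence
   t' >= st(a), so machine nu ends at t' + L a >= ct(a) and the makespan cannot
   drop: every representable subschedule is non-reducible.  Its roots of size
   d < c are obtained by running the rule on the first d jobs of its sequence,
   so they are representable, hence non-reducible, too. *)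
From mathcomp Require Import all_boot all_order all_algebra.
Import Order.TTheory GRing.Theory Num.Theory.
Local Open Scope ring_scope.
Set Implicit Arguments. Unset Strict Implicit.

Section Derivation.
Variable R : realFieldType.
Variables n m : nat.
Variable L : 'I_n -> R.
Variable C : 'I_n -> 'I_n -> bool.
Hypothesis L_gt0 : forall a, 0 < L a.

Notation state := (state R n m).

Lemma mem_append (s : state) x k t a nu :
  (a \in seqs (append s x k t) nu) = ((nu == k) && (a == x)) || (a \in seqs s nu).
Proof. by rewrite /= ffunE; case: eqP => //= _; rewrite mem_rcons inE. Qed.

Lemma placed_append (s : state) x k t b :
  placed (append s x k t) b = (b == x) || placed s b.
Proof.
apply/existsP/orP => [[nu]|[/eqP->|/existsP[nu Hb]]].
- rewrite mem_append => /orP[/andP[_ ->]|Hb]; [by left | right].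
  by apply/existsP; exists nu.
- by exists k; rewrite mem_append !eqxx.
- by exists nu; rewrite mem_append Hb orbT.
Qed.

Lemma unplaced_notin (s : state) a nu : ~~ placed s a -> a \notin seqs s nu.
Proof. by apply: contra => Ha; apply/existsP; exists nu. Qed.

Lemma proc_rcons (s : state) mu r a :
  seqs s mu = rcons r a -> proc L s mu = ct L s a.
Proof. by rewrite /proc => ->; case: r => //= b r; rewrite last_rcons. Qed.

Lemma eq_proc (s s' : state) mu :
  seqs s' mu = seqs s mu -> {in seqs s mu, stt s' =1 stt s} ->
  proc L s' mu = proc L s mu.
Proof.
rewrite /proc => -> Est; case E: (seqs s mu) => [|a r] //.
by rewrite /ct Est // E mem_last.
Qed.

Definition extends (s0 s : state) :=
  (forall b, placed s0 b -> placed s b /\ stt s b = stt s0 b) /\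
  (forall nu, proc L s0 nu <= proc L s nu).

Lemma extends_trans s1 s2 s3 : extends s1 s2 -> extends s2 s3 -> extends s1 s3.
Proof.
move=> [E12 P12] [E23 P23]; split=> [b /E12 [/E23 [Hb ->] ->] //|nu].
exact: le_trans (P12 nu) (P23 nu).
Qed.

Lemma step_extends s x k s' : step L C s (x, k) s' -> extends s s'.
Proof.
case=> /= Hx [t [[Hp _ _] ->]]; split=> [b Hb|nu].
  rewrite placed_append Hb orbT; split => //; rewrite /= ffunE.
  by case: eqP => // Ebx; rewrite -Ebx Hb in Hx.
have [->|Hne] := eqVneq nu k.
  rewrite (@proc_rcons (append s x k t) k (seqs s k) x); last by rewrite /= ffunE eqxx.
  by rewrite /ct /= ffunE eqxx (le_trans Hp) // lerDl ltW.
suff -> : proc L (append s x k t) nu = proc L s nu by [].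
apply: eq_proc => [|b Hb]; first by rewrite /= ffunE (negbTE Hne).
rewrite /= ffunE; case: eqP => // Ebx.
by move: (unplaced_notin nu Hx); rewrite -Ebx Hb.
Qed.

Definition disjoint_machines (s : state) :=
  forall a mu nu, a \in seqs s mu -> a \in seqs s nu -> mu = nu.

Definition inserted_greedily (s : state) :=
  forall mu a, a \in seqs s mu -> exists s0,
    [/\ ~~ placed s0 a, is_start L C s0 a mu (stt s a),
        forall nu, proc L s0 mu <= proc L s0 nu & extends s0 s].

Lemma rule_step_disjoint s x s' :
  disjoint_machines s -> rule_step L C s x s' -> disjoint_machines s'.
Proof.
move=> Hdis [k [_ [/= Hx [t [_ ->]]]]] a mu nu.
rewrite !mem_append => /orP[/andP[/eqP-> /eqP->]|Ha] /orP[/andP[/eqP-> /eqP Eax]|Hb] //.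
- by rewrite (negbTE (unplaced_notin nu Hx)) in Hb.
- by rewrite Eax (negbTE (unplaced_notin mu Hx)) in Ha.
- exact: Hdis Ha Hb.
Qed.

Lemma rule_step_inserted_greedily s x s' :
  inserted_greedily s -> rule_step L C s x s' -> inserted_greedily s'.
Proof.
move=> Hgr [k [Hmin Hst]]; have Hext := step_extends Hst.
case: Hst => /= Hx [t [Hs Es']] mu a; rewrite Es' in Hext *.
rewrite mem_append => /orP[/andP[/eqP-> /eqP->]|Ha].
  exists s; split => //; first by rewrite /= ffunE eqxx.
  by move=> nu; case: (Hmin nu) => [/ltW|[-> _]].
have [s0 [Ha0 Hst0 Hmin0 Hext0]] := Hgr mu a Ha.
exists s0; split => //; last exact: extends_trans Hext0 Hext.
rewrite /= ffunE; case: eqP => // Eax.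
by rewrite Eax (negbTE (unplaced_notin mu Hx)) in Ha.
Qed.

Lemma rule_run_greedy l s :
  rule_run L C (empty_state R n m) l s ->
  disjoint_machines s /\ inserted_greedily s.
Proof.
have : disjoint_machines (empty_state R n m) /\ inserted_greedily (empty_state R n m).
  by split => [a mu nu|mu a]; rewrite /= ffunE.
elim: l (empty_state R n m) => [|x l IH] s0 [Hdis Hgr] /=; first by move->.
case=> s1 [Hst Hrun]; apply: IH Hrun.
by split; [exact: rule_step_disjoint Hst | exact: rule_step_inserted_greedily Hst].
Qed.

Section MoveLastJob.
Variables (s : state) (mu nu : 'I_m) (r : seq 'I_n) (a : 'I_n) (t : R).
Hypotheses (Es : seqs s mu = rcons r a) (Hne : nu != mu).
Hypothesis Hstart : is_start L C (remove_last s mu r) a nu t.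

Let a_in_mu : a \in seqs s mu.
Proof. by rewrite Es mem_rcons mem_head. Qed.

Let proc_remove_nu : proc L (remove_last s mu r) nu = proc L s nu.
Proof. by apply: eq_proc; rewrite // /= ffunE (negbTE Hne). Qed.

Lemma greedy_start_le : inserted_greedily s -> stt s a <= t.
Proof.
move=> Hgr; have [s0 [Ha0 [_ _ Hleast0] Hmin0 [Eplaced Eproc]]] := Hgr mu a a_in_mu.
case: Hstart => Hproc Hfree _; apply: Hleast0.
  by rewrite (le_trans (Hmin0 nu)) // (le_trans (Eproc nu)) // -proc_remove_nu.
move=> b Hb0 Cab; have [/existsP[k Hbk] Est] := Eplaced b Hb0.
have Hba : b != a by apply: contraNneq Ha0 => <-.
have Hb : placed (remove_last s mu r) b.
  apply/existsP; exists k; rewrite /= ffunE; case: eqP Hbk => // ->.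
  by rewrite Es mem_rcons inE (negbTE Hba).
by rewrite /ct -Est; exact: Hfree.
Qed.

Lemma makespan_move_ge :
  disjoint_machines s -> inserted_greedily s ->
  makespan L s <= makespan L (append (remove_last s mu r) a nu t).
Proof.
move=> Hdis Hgr; set s2 := append _ a nu t.
have proc_s2_nu : proc L s2 nu = t + L a.
  rewrite (@proc_rcons s2 nu (seqs (remove_last s mu r) nu) a); last by rewrite /= ffunE eqxx.
  by rewrite /ct /= ffunE eqxx.
have le_ms2 k : proc L s2 k <= makespan L s2 by apply: le_bigmax.
apply: bigmax_le => [|k _]; first exact: bigmax_ge_id.
have [->|Hkmu] := eqVneq k mu.
  rewrite (proc_rcons Es) /ct (le_trans _ (le_ms2 nu)) // proc_s2_nu lerD2r.
  exact: greedy_start_le.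
have [->|Hknu] := eqVneq k nu.
  rewrite (le_trans _ (le_ms2 nu)) // proc_s2_nu -proc_remove_nu.
  by case: Hstart => Hproc _ _; rewrite (le_trans Hproc) // lerDl ltW.
suff <- : proc L s2 k = proc L s k by [].
apply: eq_proc => [|b Hb]; first by rewrite /= !ffunE (negbTE Hknu) (negbTE Hkmu).
rewrite /= ffunE; case: eqP Hb => // -> Hak.
by move: Hkmu; rewrite (Hdis a mu k a_in_mu Hak) eqxx.
Qed.

End MoveLastJob.

Lemma rule_run_non_reducible l (s : state) :
  rule_run L C (empty_state R n m) l s -> non_reducible L C s.
Proof.
move=> /rule_run_greedy [Hdis Hgr] [mu [r [a [Es [nu [t [Hne Hstart Hlt]]]]]]].
by move: Hlt; rewrite ltNge makespan_move_ge.
Qed.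

Lemma rule_run_cat (s : state) l1 l2 (s' : state) : rule_run L C s (l1 ++ l2) s' ->
  exists s1, rule_run L C s l1 s1 /\ rule_run L C s1 l2 s'.
Proof.
elim: l1 s => [|x l1 IH] s /=; first by exists s.
case=> s1 [H1 /IH [s2 [H12 H2]]].
by exists s2; split => //; exists s1.
Qed.

Lemma rule_runW (s : state) l (s' : state) : rule_run L C s l s' -> exists il, run L C s il s'.
Proof.
elim: l s => [|x l IH] s /=; first by move->; exists [::].
case=> s1 [[k [_ Hst]] /IH [il Hil]].
by exists ((x, k) :: il), s1.
Qed.

Lemma size_of_append (s : state) x (k : 'I_m) t : ~~ placed s x ->
  size_of (append s x k t) = (size_of s).+1.
Proof.
move=> Hx; rewrite /size_of (eq_card (B := [predU1 x & [pred a | placed s a]])).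
  by rewrite cardU1 inE Hx.
by move=> b; rewrite !inE placed_append.
Qed.

Lemma size_of_rule_run l (s : state) :
  rule_run L C (empty_state R n m) l s -> size_of s = size l.
Proof.
have : size_of (empty_state R n m) = 0%N.
  by apply: eq_card0 => b; rewrite !inE; apply/existsP => -[nu]; rewrite /= ffunE.
rewrite -(add0n (size l)); move: 0%N.
elim: l (empty_state R n m) => [|x l IH] s0 k /= Hk; first by move=> ->; rewrite addn0.
case=> s1 [[nu [_ [Hx [t [_ ->]]]]]]; rewrite addnS -addSn.
by apply: IH; rewrite size_of_append // Hk.
Qed.

End Derivation.

Theorem lemma6 (R : realFieldType) (n m : nat) (L : 'I_n -> R)
    (C : 'I_n -> 'I_n -> bool)
    (HL : forall a, 0 < L a)
    (HCsym : forall a b, C a b = C b a)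
    (HCdiag : forall a, C a a = false)
    (s : state R n m) :
  @representable R n m L C s -> @prime_sub R n m L C s.
Proof.
case=> l [_ Hl]; split.
- by have [il Hil] := rule_runW Hl; exists il.
- exact: (rule_run_non_reducible HL Hl).
move=> d; rewrite (size_of_rule_run Hl) => Hd.
move: Hl; rewrite -(cat_take_drop d l) => /rule_run_cat [r [Hr Hrs]].
exists r; split.
- have [il1 ?] := rule_runW Hr; have [il2 ?] := rule_runW Hrs.
  by exists il1, il2.
- by rewrite (size_of_rule_run Hr) size_take Hd.
- exact: (rule_run_non_reducible HL Hr).
Qed.
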